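(* For every connected graph $\hat G$ on $n$ vertices with maximum degree $\Delta$ and treewidth $\mathrm{tw}$, $$\mathrm{OPT}(\hat G)=O\big(\Delta(\Delta+\mathrm{tw}\log n)\,n\log n\big).$$
   Context: Let $\hat G=(V,\hat E)$ be a connected unweighted graph with shortest-path metric $\hat\delta$. Let $\widehat{\mathit{NE}}$ be the set of unordered pairs $\{a,b\}$ of distinct vertices with $\{a,b\}\notin\hat E$. For $(u,v)\in V^2$, let $S_{u,v}$ be the set of $\{a,b\}\in\widehat{\mathit{NE}}$ such that $\hat\delta(u,a)+\hat\delta(b,v)+1<\hat\delta(u,v)$ or $\hat\delta(u,b)+\hat\delta(a,v)+1<\hat\delta(u,v)$. Define $\mathrm{OPT}(\hat G)$ as the minimum cardinality of a set $T\subseteq V\times V$ such that $\bigcup_{(u,v)\in T}S_{u,v}=\widehat{\mathit{NE}}$. Treewidth is defined via tree decompositions: the width of a decomposition is the maximum bag size minus one. *)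

From mathcomp Require Import all_boot.
Set Implicit Arguments. Unset Strict Implicit. Unset Printing Implicit Defensive.

Definition simple_graph (T : finType) (e : rel T) : Prop :=
  symmetric e /\ irreflexive e.

Definition connected_graph (T : finType) (e : rel T) : Prop :=
  forall u v : T, connect e u v.

Fixpoint ball (T : finType) (e : rel T) (u : T) (k : nat) : {set T} :=
  match k with
  | 0 => [set u]
  | k'.+1 => ball e u k' :|: [set y | [exists x in ball e u k', e x y]]
  end.

(* Shortest-path distance: least k such that v is within k steps of u
   (in a connected graph this is < #|T|; default #|T| otherwise). *)
Definition dist (T : finType) (e : rel T) (u v : T) : nat :=
  find (fun k => v \in ball e u k) (iota 0 #|T|).

(* Non-edges, as ordered pairs of distinct non-adjacent vertices
   (the conditions below are symmetric in the pair). *)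
Definition nonedges (T : finType) (e : rel T) : {set T * T} :=
  [set p : T * T | (p.1 != p.2) && ~~ e p.1 p.2].

Definition Sset (T : finType) (e : rel T) (u v : T) : {set T * T} :=
  [set p in nonedges e |
     (dist e u p.1 + dist e p.2 v + 1 < dist e u v) ||
     (dist e u p.2 + dist e p.1 v + 1 < dist e u v)].

Definition covers (T : finType) (e : rel T) (X : {set T * T}) : bool :=
  [forall p in nonedges e, [exists q in X, p \in Sset e q.1 q.2]].

(* OPT = minimum cardinality of a covering set of pairs (the full set of
   pairs always covers, so this is a genuine minimum). *)
Definition OPT (T : finType) (e : rel T) : nat :=
  \big[minn/#|[set: T * T]|]_(X : {set T * T} | covers e X) #|X|.

Definition max_degree (T : finType) (e : rel T) : nat :=
  \max_(v : T) #|[set w | e v w]|.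

Definition is_tree (I : finType) (r : rel I) : Prop :=
  [/\ symmetric r, irreflexive r, (forall i j : I, connect r i j) &
      (forall c : seq I, uniq c -> 2 < size c -> ~~ cycle r c)].

Definition tree_decomposition (T : finType) (e : rel T)
    (I : finType) (r : rel I) (B : I -> {set T}) : Prop :=
  [/\ is_tree r,
      (forall v : T, exists i, v \in B i),
      (forall u v : T, e u v -> exists i, (u \in B i) && (v \in B i)) &
      (forall v : T, forall i j : I, v \in B i -> v \in B j ->
          connect [rel a b | [&& r a b, v \in B a & v \in B b]] i j)].

Definition td_width (T : finType) (I : finType) (B : I -> {set T}) : nat :=
  (\max_(i : I) #|B i|) - 1.

Definition is_treewidth (T : finType) (e : rel T) (k : nat) : Prop :=
  (exists (I : finType) (r : rel I) (B : I -> {set T}),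
      tree_decomposition e r B /\ td_width B = k) /\
  (forall (I : finType) (r : rel I) (B : I -> {set T}),
      tree_decomposition e r B -> k <= td_width B).

From mathcomp Require Import all_boot zify.
Set Implicit Arguments. Unset Strict Implicit. Unset Printing Implicit Defensive.

(* Suppose every vertex a carries a set H a of "hubs" such that any two
   vertices a, b have a common hub s in H a and H b lying on a shortest a-b
   path.  Then the set X of pairs (a, y), with y equal or adjacent to a hub of
   a, covers every non-edge {a, b}: s itself, or the neighbour of s towards
   the nearer endpoint, paired with an endpoint yields a shortcut
   (shortcut_near, covers_hub_cover).  Hence
   OPT <= |X| <= n * max_a |H a| * (D + 1).

   Hubs are built from balanced separators.  Using the Helly property of
   subtrees of a tree, every vertex set K has a bag whose removal leaves only
   components of size <= |K|/2 (balanced_bag).  Starting from K_0 = V and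
   letting K_(m+1) be the component of K_m minus its separator containing a,
   the sizes halve, so after log n + 1 rounds a is separated from everything;
   H a is the union of these log n + 1 separators, of size <= tw + 1 each.
   Two vertices share the sequence K_m until a separator meets a shortest path
   between them, which provides the common hub (hub_on_shortest_path). *)

Lemma card_bigcup_leq (I T : finType) (P : pred I) (F : I -> {set T}) :
  #|\bigcup_(i | P i) F i| <= \sum_(i | P i) #|F i|.
Proof.
apply: (big_ind2 (fun (A : {set T}) n => #|A| <= n)) => //; first by rewrite cards0.
move=> A m B k HA HB; apply: leq_trans (leq_add HA HB).
by rewrite -cardsUI leq_addr.
Qed.

Section Distance.
Variables (T : finType) (e : rel T).
Hypothesis esym : symmetric e.
Hypothesis econ : connected_graph e.

Lemma ball0 u v : (v \in ball e u 0) = (v == u).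
Proof. by rewrite /= inE. Qed.

Lemma ballS u k v :
  (v \in ball e u k.+1) = (v \in ball e u k) || [exists x in ball e u k, e x v].
Proof. by rewrite /= !inE. Qed.

Lemma ball_mono u k m : k <= m -> ball e u k \subset ball e u m.
Proof.
elim: m => [|m IH]; first by rewrite leqn0 => /eqP->.
rewrite leq_eqVlt => /orP[/eqP->//|/IH Hkm].
by apply: subset_trans Hkm _; rewrite /= subsetUl.
Qed.

Lemma ball1 u v : e u v -> v \in ball e u 1.
Proof.
by move=> Euv; rewrite ballS; apply/orP; right; apply/existsP; exists u; rewrite ball0 eqxx Euv.
Qed.

Lemma ball_comp u v w a b :
  v \in ball e u a -> w \in ball e v b -> w \in ball e u (a + b).
Proof.
move=> Hv; elim: b w => [|b IH] w; first by rewrite addn0 ball0 => /eqP->.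
rewrite addnS !ballS => /orP[/IH->//|/existsP[x /andP[Hx Exw]]].
by apply/orP; right; apply/existsP; exists x; rewrite Exw IH.
Qed.

Lemma ball_sym u v k : v \in ball e u k -> u \in ball e v k.
Proof.
elim: k v => [|k IH] v; first by rewrite !ball0 => /eqP->.
rewrite ballS => /orP[/IH Hu|/existsP[x /andP[Hx Exv]]]; first by rewrite ballS Hu.
have Evx : e v x by rewrite esym.
by have := ball_comp (ball1 Evx) (IH _ Hx); rewrite add1n.
Qed.

Lemma path_ball u p : path e u p -> last u p \in ball e u (size p).
Proof.
elim: p u => [|x p IH] u /=; first by rewrite ball0.
by move=> /andP[Eux Hp]; have := ball_comp (ball1 Eux) (IH _ Hp); rewrite add1n.
Qed.

Lemma ball_path u k v : v \in ball e u k ->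
  exists p, [/\ path e u p, last u p = v & size p <= k].
Proof.
elim: k v => [|k IH] v; first by rewrite ball0 => /eqP->; exists [::].
rewrite ballS => /orP[/IH [p [Hp Hl Hs]]|/existsP[x /andP[Hx Exv]]].
  by exists p; split => //; apply: leq_trans Hs _.
have [p [Hp Hl Hs]] := IH _ Hx.
by exists (rcons p v); rewrite rcons_path last_rcons size_rcons Hp Hl Exv.
Qed.

(* In a connected graph every vertex is reached within #|T| - 1 steps, so
   [dist] really is the least radius of a ball containing the target. *)
Lemma ball_ex u v : exists2 k, k < #|T| & v \in ball e u k.
Proof.
have /connectP[p Hp ->] := econ u v; case: (shortenP Hp) => p' Hp' Hu _.
exists (size p'); last exact: path_ball.
have := card_uniqP Hu; rewrite /= => Hc.
by have := max_card (mem (u :: p')); rewrite Hc.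
Qed.

Lemma dist_ball u v : v \in ball e u (dist e u v).
Proof.
have [k Hk Hb] := ball_ex u v.
have Hh : has (fun k => v \in ball e u k) (iota 0 #|T|).
  by apply/hasP; exists k => //; rewrite mem_iota.
have := nth_find 0 Hh; rewrite nth_iota ?add0n //.
by have := Hh; rewrite has_find size_iota.
Qed.

Lemma dist_le u v k : v \in ball e u k -> dist e u v <= k.
Proof.
move=> Hb; rewrite leqNgt; apply/negP => Hlt.
have Hsz : dist e u v <= #|T| by rewrite /dist -{2}(size_iota 0 #|T|) find_size.
have Hk : k < #|T| by apply: leq_trans Hlt Hsz.
by have := before_find 0 Hlt; rewrite nth_iota // add0n Hb.
Qed.

Lemma dist_leP u v k : (dist e u v <= k) = (v \in ball e u k).
Proof.
apply/idP/idP; last exact: dist_le.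
by move=> Hk; apply: (subsetP (ball_mono u Hk)); apply: dist_ball.
Qed.

Lemma dist_sym u v : dist e u v = dist e v u.
Proof.
by apply/eqP; rewrite eqn_leq !dist_leP; apply/andP; split; apply: ball_sym; apply: dist_ball.
Qed.

Lemma dist_tri u v w : dist e u w <= dist e u v + dist e v w.
Proof. by rewrite dist_leP; apply: ball_comp; apply: dist_ball. Qed.

Lemma distuu u : dist e u u = 0.
Proof. by apply/eqP; rewrite -leqn0 dist_leP ball0. Qed.

Lemma dist_le1 u v : dist e u v <= 1 -> (u == v) || e u v.
Proof.
rewrite dist_leP ballS ball0 eq_sym => /orP[->//|/existsP[x /andP[]]].
by rewrite ball0 => /eqP->->; rewrite orbT.
Qed.

Lemma dist_pred u v k : dist e u v = k.+1 -> exists2 w, e w v & dist e u w = k.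
Proof.
move=> Hd; have := dist_ball u v; rewrite Hd ballS => /orP[Hb|/existsP[w /andP[Hw Ewv]]].
  by have := dist_le Hb; rewrite Hd ltnn.
exists w => //; apply/eqP; rewrite eqn_leq dist_le //=.
have := dist_tri u w v; have := dist_le (ball1 Ewv); rewrite Hd; lia.
Qed.

Lemma path_dist u p : path e u p -> dist e u (last u p) <= size p.
Proof. by move=> /path_ball; rewrite -dist_leP. Qed.

End Distance.

Lemma OPT_min (T : finType) (e : rel T) (X : {set T * T}) : covers e X -> OPT e <= #|X|.
Proof.
move=> HX; rewrite /OPT.
have : X \in index_enum {set T * T} by rewrite mem_index_enum.
elim: (index_enum _) => [//|Y s IH]; rewrite inE big_cons => /orP[/eqP<-|/IH Hs].
  by rewrite HX geq_minl.
by case: (covers e Y) => //; rewrite geq_min Hs orbT.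
Qed.

Section HubCover.
Variables (T : finType) (e : rel T).
Hypothesis esym : symmetric e.
Hypothesis econ : connected_graph e.

(* A non-edge {a, b} with a vertex s on a shortest a-b path is shortcut by a
   pair (c, y) with c in {a, b} and y equal to s or adjacent to it: if s is
   far from the middle take y = s, otherwise step from s towards the nearer
   endpoint and pair it with the farther one. *)
Lemma shortcut_near a b s : a != b -> ~~ e a b ->
  dist e a s + dist e s b = dist e a b ->
  exists2 y, (s == y) || e s y & ((a, b) \in Sset e a y) || ((a, b) \in Sset e b y).
Proof.
move=> ab nab Hs.
have Hd : 1 < dist e a b.
  by rewrite ltnNge; apply/negP => /(dist_le1 econ); rewrite (negbTE ab) (negbTE nab).
have inS c y : ((a, b) \in Sset e c y) =
    (dist e c a + dist e b y + 1 < dist e c y) || (dist e c b + dist e a y + 1 < dist e c y).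
  by rewrite /Sset inE /nonedges inE /= ab nab.
have dsym := dist_sym esym econ; have dtri := dist_tri econ; have d0 := distuu econ.
have dbs : dist e b s = dist e s b by rewrite dsym.
set i := dist e a s in Hs; set j := dist e s b in Hs dbs.
have ss : (s == s) || e s s by rewrite eqxx.
case: (ltnP j.+1 i) => [Hji|Hij].
  by exists s => //; rewrite inS d0 dbs; apply/orP; left; lia.
case: (ltnP i.+1 j) => [Hij2|Hji2].
  by exists s => //; rewrite (inS b) d0; apply/orP; right; apply/orP; right; lia.
case: (leqP j i) => Hle.
  have Hj1 : dist e b s = j.-1.+1 by rewrite dbs; lia.
  have [p Eps Hp] := dist_pred econ Hj1.
  have := dtri a p b; rewrite (dsym p b) Hp -Hs => Hap.
  exists p; first by rewrite esym Eps orbT.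
  by rewrite inS d0 Hp; apply/orP; left; lia.
have Hi1 : dist e a s = i.-1.+1 by rewrite -/i; lia.
have [p Eps Hp] := dist_pred econ Hi1.
have := dtri b p a; rewrite (dsym p a) Hp (dsym b a) -Hs => Hbp.
exists p; first by rewrite esym Eps orbT.
by rewrite (inS b) d0 Hp; apply/orP; right; apply/orP; right; lia.
Qed.

Variable H : T -> {set T}.

Definition closed_nbhd (A : {set T}) : {set T} :=
  [set y | [exists x in A, (x == y) || e x y]].

Definition hub_cover : {set T * T} := [set q | q.2 \in closed_nbhd (H q.1)].

Lemma covers_hub_cover :
  (forall a b, a != b -> ~~ e a b ->
     exists2 s, (s \in H a) && (s \in H b) & dist e a s + dist e s b = dist e a b) ->
  covers e hub_cover.
Proof.
move=> Hh; apply/forallP => -[a b]; apply/implyP; rewrite inE /= => /andP[ab nab].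
have [s /andP[sa sb] Hs] := Hh a b ab nab.
have [y sy Hy] := shortcut_near ab nab Hs.
have yX c : s \in H c -> (c, y) \in hub_cover.
  by move=> Hc; rewrite !inE; apply/existsP; exists s; rewrite Hc.
by apply/existsP; case/orP: Hy => Hy; [exists (a, y) | exists (b, y)]; rewrite Hy yX.
Qed.

(* Each vertex contributes itself and at most D neighbours. *)
Lemma card_closed_nbhd A : #|closed_nbhd A| <= #|A| * (max_degree e).+1.
Proof.
have -> : closed_nbhd A = \bigcup_(x in A) (x |: [set y | e x y]).
  apply/setP => y; rewrite inE; apply/existsP/bigcupP => [[x /andP[Hx Hxy]]|[x Hx]].
    by exists x => //; rewrite !inE eq_sym.
  by rewrite !inE => Hy; exists x; rewrite Hx eq_sym.
apply: leq_trans (card_bigcup_leq _ _) _; rewrite -sum_nat_const leq_sum // => x _.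
rewrite cardsU1 -add1n leq_add ?leq_b1 //.
exact: (@leq_bigmax T (fun v => #|[set w | e v w]|) x).
Qed.

Lemma card_hub_cover : #|hub_cover| <= \sum_a #|closed_nbhd (H a)|.
Proof.
have Hsub : hub_cover \subset \bigcup_a [set (a, y) | y in closed_nbhd (H a)].
  apply/subsetP => -[a y]; rewrite inE /= => Hy.
  by apply/bigcupP; exists a => //; apply/imsetP; exists y.
apply: leq_trans (subset_leq_card Hsub) _.
apply: leq_trans (card_bigcup_leq _ _) _; apply: leq_sum => a _.
exact: leq_imset_card.
Qed.

End HubCover.

Notation restr R S := [rel x y | [&& R x y, x \in S & y \in S]].

Definition connected_in (I : finType) (R : rel I) (S : {set I}) : Prop :=
  forall x y, x \in S -> y \in S -> connect (restr R S) x y.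

Definition gcomp (T : finType) (e : rel T) (S : {set T}) (v : T) : {set T} :=
  [set y in S | connect (restr e S) v y].

Section Restriction.
Variables (I : finType) (R : rel I) (S : {set I}).

Lemma restr_sym : symmetric R -> symmetric (restr R S).
Proof. by move=> Rsym x y /=; rewrite Rsym; case: (x \in S); case: (y \in S); rewrite ?andbF. Qed.

Lemma path_restr x p : path R x p -> {subset x :: p <= S} -> path (restr R S) x p.
Proof.
elim: p x => [//|y p IH] x /= /andP[Rxy Hp] Hs.
rewrite Rxy (Hs x) ?(Hs y) ?inE ?eqxx ?orbT //=.
by apply: IH => // z Hz; apply: Hs; rewrite inE Hz orbT.
Qed.

Lemma path_restr_mem x p : path (restr R S) x p -> {subset p <= S}.
Proof.
elim: p x => [//|y p IH] x /= /andP[/and3P[_ _ Hy] Hp] z.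
by rewrite inE => /orP[/eqP->//|]; apply: IH; apply: Hp.
Qed.

Lemma path_restr_sub x p : path (restr R S) x p -> path R x p.
Proof. by apply: sub_path => a b /and3P[]. Qed.

End Restriction.

Lemma path_connect (T : finType) (R : rel T) a p y :
  path R a p -> y \in a :: p -> connect R a y.
Proof.
elim: p a => [|z p IH] a /=; first by rewrite inE => _ /eqP->.
move=> /andP[Raz Hp]; rewrite inE => /orP[/eqP->//|Hy].
exact: connect_trans (connect1 Raz) (IH _ Hp Hy).
Qed.

Section Tree.
Variables (I : finType) (r : rel I).
Hypothesis rsym : symmetric r.
Hypothesis rirr : irreflexive r.
Hypothesis racyc : forall c : seq I, uniq c -> 2 < size c -> ~~ cycle r c.

Lemma no_back_edge x y p q : path r x (y :: p) -> uniq (x :: y :: p) ->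
  r x q -> q != y -> q \notin x :: y :: p.
Proof.
move=> Hp Hu Rxq qy; rewrite in_cons negb_or; apply/andP; split.
  by apply/eqP => E; rewrite E rirr in Rxq.
apply/negP => Hin; set s := y :: p in Hin Hp Hu.
set i := index q s.
have Hi : i < size s by rewrite index_mem.
have Hi1 : 0 < i by rewrite /i /s /= eq_sym (negbTE qy).
have Ht := take_nth x Hi; rewrite nth_index // in Ht.
have Hu2 : uniq (x :: take i.+1 s) by have := take_uniq i.+2 Hu.
have Hsz : 2 < size (x :: take i.+1 s).
  rewrite /= size_take; case: ifP => _; first by rewrite !ltnS.
  by rewrite ltnS; exact: leq_ltn_trans Hi1 Hi.
have := racyc Hu2 Hsz; apply/negP/negPn.
rewrite Ht /= rcons_path last_rcons rsym Rxq andbT -Ht.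
exact: take_path.
Qed.

Definition is_leaf (N : {set I}) (l p : I) :=
  [&& l \in N, p \in N, r l p & [forall q, (q \in N) && r l q ==> (q == p)]].

Lemma has_nb (N : {set I}) x y : connected_in r N -> x \in N -> y \in N -> x != y ->
  exists2 z, z \in N & r x z.
Proof.
move=> Hc Hx Hy xy; have /connectP[[|z p] Hp Hl] := Hc x y Hx Hy.
  by rewrite Hl eqxx in xy.
by move: Hp => /= /andP[/and3P[Rxz _ Hz] _]; exists z.
Qed.

(* A connected set of at least two nodes of a forest has a leaf: otherwise
   simple paths could be extended forever. *)
Lemma leaf_ex (N : {set I}) : 1 < #|N| -> connected_in r N -> exists l p, is_leaf N l p.
Proof.
move=> HN Hc.
have [x0 Hx0] : exists x, x \in N by apply/card_gt0P; lia.
have Hnb x : x \in N -> exists2 z, z \in N & r x z.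
  move=> Hx; have [y Hy xy] : exists2 y, y \in N & x != y.
    have /card_gt0P[y] : 0 < #|N :\ x| by have := cardsD1 x N; rewrite Hx; lia.
    by rewrite !inE => /andP[Hxy Hy]; exists y; rewrite // eq_sym.
  exact: has_nb Hc Hx Hy xy.
case: (boolP [exists l, exists p, is_leaf N l p]).
  by move=> /existsP[l /existsP[p Hl]]; exists l, p.
rewrite negb_exists => /forallP Hnl; exfalso.
have Hother x y : x \in N -> y \in N -> r x y -> exists2 q, (q \in N) && r x q & q != y.
  move=> Hx Hy Rxy; have := Hnl x; rewrite negb_exists => /forallP /(_ y).
  rewrite /is_leaf Hx Hy Rxy /= negb_forall => /existsP[q].
  by rewrite negb_imply => /andP[Hq Hqy]; exists q.
have Hlong k : exists x p, [/\ x \in N, path (restr r N) x p, uniq (x :: p) & size p = k.+1].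
  elim: k => [|k [x [p [Hx Hp Hu Hs]]]].
    have [z Hz Rxz] := Hnb x0 Hx0; exists x0, [:: z]; split => //=.
      by rewrite Rxz Hx0 Hz.
    by rewrite inE andbT; apply/eqP => E; rewrite E rirr in Rxz.
  case: p Hp Hu Hs => [//|y p] Hp Hu Hs.
  move: (Hp) => /= /andP[/and3P[Rxy _ Hy] Hp'].
  have [q /andP[Hq Rxq] qy] := Hother x y Hx Hy Rxy.
  have qnew := no_back_edge (path_restr_sub Hp) Hu Rxq qy.
  exists q, (x :: y :: p); split => //.
  - by rewrite /= rsym Rxq Hq Hx Rxy Hy Hp'.
  - by apply/andP; split.
  - by rewrite /= -Hs.
have [x [p [_ _ Hu Hs]]] := Hlong #|I|.
have := card_uniqP Hu; rewrite /= Hs => Hcard.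
by have := max_card (mem (x :: p)); rewrite Hcard; lia.
Qed.

Lemma leaf_eq (N : {set I}) l p q : is_leaf N l p -> q \in N -> r l q -> q = p.
Proof. by move=> /and4P[_ _ _ /forallP Hl] Hq Rlq; have := Hl q; rewrite Hq Rlq => /eqP. Qed.

Lemma leaf_in (N S : {set I}) l p w : is_leaf N l p -> S \subset N -> connected_in r S ->
  l \in S -> w \in S -> w != l -> p \in S.
Proof.
move=> Hl HSN Hc lS wS wl.
have lw : l != w by rewrite eq_sym.
have [z zS Rlz] := has_nb Hc lS wS lw.
by rewrite -(leaf_eq Hl (subsetP HSN _ zS) Rlz).
Qed.

Lemma connected_del_leaf (N S : {set I}) l p : is_leaf N l p -> S \subset N ->
  connected_in r S -> connected_in r (S :\ l).
Proof.
move=> Hl HSN Hc x y; rewrite !inE => /andP[xl xS] /andP[yl yS].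
have /connectP[P HP HyP] := Hc x y xS yS.
case: (shortenP HP) HyP => p' Hp' Hu _ Hyl.
have lp' : l \notin p'.
  apply/negP => /splitPr Hsp; move: Hsp Hp' Hu Hyl => [p1 p2] Hp' Hu Hyl.
  rewrite cat_path /= in Hp'; move: Hp' => /and3P[_ /and3P[R1 L1S _] Hp2].
  have E1 : last x p1 = p by apply: (leaf_eq Hl (subsetP HSN _ L1S)); rewrite rsym.
  case: p2 Hp2 Hu Hyl => [|z p3] Hp2 Hu Hyl.
    by move: Hyl; rewrite last_cat /= => Hyl; rewrite Hyl eqxx in yl.
  move: Hp2 => /= /andP[/and3P[Rlz _ zS] _].
  have E2 : z = p by apply: (leaf_eq Hl (subsetP HSN _ zS)).
  move: Hu; rewrite -cat_cons cat_uniq => /and3P[_ /hasPn Hdisj _].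
  have := Hdisj z; rewrite !inE eqxx orbT => /(_ isT); apply/negP/negPn.
  by have := mem_last x p1; rewrite E1 -E2 inE.
apply/connectP; exists p' => //.
apply: path_restr; first exact: path_restr_sub Hp'.
move=> z; rewrite inE => /orP[/eqP->|zp]; first by rewrite !inE xl xS.
rewrite !inE (path_restr_mem Hp' zp) andbT; apply/negP => /eqP E.
by rewrite -E zp in lp'.
Qed.

(* Two intersecting subtrees that do not reduce to the leaf l still
   intersect after l is removed (then both contain the parent of l). *)
Lemma leaf_del_meet (N F G : {set I}) l p : is_leaf N l p ->
  F \subset N -> G \subset N -> connected_in r F -> connected_in r G ->
  (exists2 w, w \in F & w != l) -> (exists2 w, w \in G & w != l) ->
  F :&: G != set0 -> (F :\ l) :&: (G :\ l) != set0.
Proof.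
move=> Hl HFN HGN HcF HcG [wF wFF wFl] [wG wGG wGl] /set0Pn[z]; rewrite inE => /andP[zF zG].
have /and4P[_ _ Rlp _] := Hl.
have pl : p != l by apply/eqP => E; rewrite E rirr in Rlp.
case: (eqVneq z l) => [Ezl|zl]; last by apply/set0Pn; exists z; rewrite !inE zl zF zG.
rewrite Ezl in zF zG; apply/set0Pn; exists p.
by rewrite !inE pl (leaf_in Hl HFN HcF zF wFF wFl) (leaf_in Hl HGN HcG zG wGG wGl).
Qed.

(* Helly property of subtrees: pairwise intersecting subtrees of a tree N
   have a common node.  By induction on |N|, removing a leaf. *)
Lemma helly (J : finType) n : forall (F : J -> {set I}) (N : {set I}),
  #|N| <= n -> N != set0 -> connected_in r N ->
  (forall j, [/\ F j != set0, F j \subset N & connected_in r (F j)]) ->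
  (forall j k, F j :&: F k != set0) ->
  exists2 c, c \in N & forall j, c \in F j.
Proof.
elim: n => [|n IH] F N Hn HN0 HcN HF Hint.
  by move: Hn; rewrite leqn0 cards_eq0 (negbTE HN0).
have [c cN] := set0Pn _ HN0.
case: (leqP #|N| 1) => HN1.
  exists c => // j; have [/set0Pn[z zF] HFN _] := HF j.
  by rewrite (card_le1_eqP HN1 z c (subsetP HFN _ zF) cN).
have [l [p Hl]] := leaf_ex HN1 HcN.
have /and4P[lN pN Rlp _] := Hl.
have pl : p != l by apply/eqP => E; rewrite E rirr in Rlp.
case: (boolP [exists j, F j \subset [set l]]) => [/existsP[j Hj]|].
  exists l => // k; have /set0Pn[z] := Hint j k; rewrite inE => /andP[zj zk].
  by have := subsetP Hj _ zj; rewrite inE => /eqP <-.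
rewrite negb_exists => /forallP Hnj.
have Hw j : exists2 w, w \in F j & w != l.
  by have /subsetPn[w wF] := Hnj j; rewrite inE => wl; exists w.
have [|||j|j k|c' c'N Hc'] := IH (fun j => F j :\ l) (N :\ l).
- by move: Hn; rewrite (cardsD1 l N) lN; lia.
- by apply/set0Pn; exists p; rewrite !inE pl.
- exact: connected_del_leaf Hl (subxx _) HcN.
- have [_ HFN HcF] := HF j; have [w wF wl] := Hw j; split.
  + by apply/set0Pn; exists w; rewrite !inE wl.
  + exact: setSD.
  + exact: connected_del_leaf Hl HFN HcF.
- have [_ HFj Hcj] := HF j; have [_ HFk Hck] := HF k.
  exact: leaf_del_meet Hl HFj HFk Hcj Hck (Hw j) (Hw k) (Hint j k).
- exists c'; first by move: c'N; rewrite inE => /andP[].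
  by move=> j; have := Hc' j; rewrite inE => /andP[].
Qed.

End Tree.

Lemma big_parts_meet (X : finType) (K A B : {set X}) : A \subset K -> B \subset K ->
  #|K| < 2 * #|A| -> #|K| < 2 * #|B| -> A :&: B != set0.
Proof.
move=> AK BK HA HB; rewrite -card_gt0.
have := cardsUI A B; have : #|A :|: B| <= #|K| by apply: subset_leq_card; rewrite subUset AK BK.
lia.
Qed.

Section BalancedSeparator.
Variables (T : finType) (e : rel T).
Hypothesis esym : symmetric e.
Variables (I : finType) (r : rel I) (B : I -> {set T}).
Hypothesis Htd : tree_decomposition e r B.

Definition bags_meeting (C : {set T}) : {set I} := [set k | [exists x in C, x \in B k]].

Lemma bags_meetingI (C : {set T}) x k : x \in C -> x \in B k -> k \in bags_meeting C.
Proof. by move=> xC xk; rewrite inE; apply/existsP; exists x; rewrite xC. Qed.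

Lemma bags_meeting_connected S v : connected_in r (bags_meeting (gcomp e S v)).
Proof.
have [_ _ Hedge Hsub] := Htd.
set C := gcomp e S v.
have one x : x \in C -> forall k1 k2, x \in B k1 -> x \in B k2 ->
    connect (restr r (bags_meeting C)) k1 k2.
  move=> xC k1 k2 H1 H2; move: (Hsub x k1 k2 H1 H2); apply: connect_sub.
  move=> a b /and3P[Rab xa xb]; apply: connect1.
  by rewrite /= Rab (bags_meetingI xC xa) (bags_meetingI xC xb).
move=> k1 k2; rewrite !inE => /existsP[x1 /andP[x1C x1k]] /existsP[x2 /andP[x2C x2k]].
have Hc : connect (restr e S) x1 x2.
  move: x1C x2C; rewrite !inE => /andP[_ H1] /andP[_ H2].
  by apply: connect_trans H2; rewrite (sym_connect_sym (restr_sym S esym)).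
case/connectP: Hc => P HP E; rewrite E in x2k; clear E x2C.
elim: P x1 k1 x1C x1k HP x2k => [|y P IH] x1 k1 x1C x1k /=; first by move=> _; apply: one.
move=> /andP[/and3P[Exy _ yS] HP] Hl.
have [k /andP[x1k' yk]] := Hedge _ _ Exy.
have yC : y \in C.
  move: x1C; rewrite !inE yS => /andP[x1S Hv]; apply: connect_trans Hv _.
  by apply: connect1; rewrite /= Exy x1S yS.
exact: connect_trans (one _ x1C _ _ x1k x1k') (IH y k yC yk HP Hl).
Qed.

(* Otherwise every bag i misses a component
   C i of more than half of K; these pairwise meet, so the subtrees of bags
   meeting them have a common node c by Helly, and C c would meet B c. *)
Lemma balanced_bag (x0 : T) (K : {set T}) :
  exists i, forall v, 2 * #|gcomp e (K :\: B i) v| <= #|K|.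
Proof.
have [[rsym rirr rcon racyc] Hcov _ _] := Htd.
case: (boolP [exists i, [forall v, 2 * #|gcomp e (K :\: B i) v| <= #|K|]]).
  by move=> /existsP[i /forallP Hi]; exists i.
rewrite negb_exists => /forallP Hno; exfalso.
have Hex i : exists v, #|K| < 2 * #|gcomp e (K :\: B i) v|.
  by have := Hno i; rewrite negb_forall => /existsP[v]; rewrite -ltnNge; exists v.
pose C i := gcomp e (K :\: B i) (xchoose (Hex i)).
have Cbig i : #|K| < 2 * #|C i| := xchooseP (Hex i).
have CK i : C i \subset K by apply/subsetP => x; rewrite !inE => /andP[/andP[]].
have CB i x : x \in C i -> x \notin B i by rewrite !inE => /andP[/andP[]].
have [i0 _] := Hcov x0.
have [|||||c _ Hc] := @helly I r rsym rirr racyc I #|[set: I]|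
    (fun i => bags_meeting (C i)) [set: I].
- by [].
- by apply/set0Pn; exists i0.
- by move=> i j _ _; rewrite (@eq_connect _ _ r) ?rcon // => a b /=; rewrite !inE !andbT.
- move=> i; split; last exact: bags_meeting_connected.
  + have /card_gt0P[x xC] : 0 < #|C i| by move: (Cbig i); case: #|C i|.
    have [k xk] := Hcov x.
    by apply/set0Pn; exists k; apply: bags_meetingI xC xk.
  + exact: subsetT.
- move=> i j; have /set0Pn[x] := big_parts_meet (CK i) (CK j) (Cbig i) (Cbig j).
  rewrite inE => /andP[xi xj]; have [k xk] := Hcov x.
  apply/set0Pn; exists k; rewrite inE /=.
  by apply/andP; split; [apply: bags_meetingI xi xk | apply: bags_meetingI xj xk].
have := Hc c; rewrite inE => /existsP[x /andP[xC xB]].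
by have := CB c x xC; rewrite xB.
Qed.

End BalancedSeparator.

Section Hubs.
Variables (T : finType) (e : rel T).
Hypothesis esym : symmetric e.
Hypothesis econ : connected_graph e.
Variable sep : {set T} -> {set T}.
Hypothesis sep_balanced : forall K v, 2 * #|gcomp e (K :\: sep K) v| <= #|K|.

Let lg := trunc_log 2 #|T|.

Fixpoint region (a : T) (m : nat) : {set T} :=
  match m with
  | 0 => setT
  | m'.+1 => gcomp e (region a m' :\: sep (region a m')) a
  end.

Definition hubs a : {set T} := \bigcup_(m < lg.+1) sep (region a m).

Lemma region_halves a m : 2 ^ m * #|region a m| <= #|T|.
Proof.
elim: m => [|m IH] /=; first by rewrite cardsT mul1n.
apply: leq_trans IH; rewrite expnS -mulnA mulnCA leq_mul2l.
by rewrite sep_balanced orbT.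
Qed.

Lemma region_depth a m : a \in region a m -> m <= lg.
Proof.
move=> Ha; apply: trunc_log_max => //.
apply: leq_trans (region_halves a m); rewrite -{1}[2 ^ m]muln1 leq_mul2l card_gt0.
by apply/orP; right; apply/set0Pn; exists a.
Qed.

Lemma gcomp_eq (S : {set T}) a b : connect (restr e S) a b -> gcomp e S a = gcomp e S b.
Proof.
have Hs := sym_connect_sym (restr_sym S esym).
move=> Hab; apply/setP => y; rewrite !inE; congr (_ && _); apply/idP/idP => Hy.
  by apply: connect_trans Hy; rewrite Hs.
exact: connect_trans Hab Hy.
Qed.

(* If a and b share their region m and a path from a to b stays inside it,
   then some vertex of the path is a hub of both: either the separator of
   the region meets the path, or a and b share region m + 1 as well, and the
   path stays inside that.  The induction is on the rounds left, d. *)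
Lemma hub_on_path a b p : path e a p -> last a p = b -> forall d m, lg.+1 - m <= d ->
  region a m = region b m -> {subset a :: p <= region a m} ->
  exists2 s, s \in a :: p & (s \in hubs a) && (s \in hubs b).
Proof.
move=> Hp Hl d; elim: d => [|d IH] m Hd Eab Hsub.
  by have := region_depth (Hsub a (mem_head _ _)); lia.
have Hm := region_depth (Hsub a (mem_head _ _)).
set K := region a m in Eab Hsub.
case: (boolP (has (mem (sep K)) (a :: p))) => [/hasP[s Hs sK]|Hno].
  have m_lt : m < lg.+1 by [].
  exists s => //; apply/andP; split; apply/bigcupP; exists (Ordinal m_lt) => //=.
  by rewrite -Eab.
have Hsub2 : {subset a :: p <= K :\: sep K}.
  move=> y Hy; rewrite inE Hsub // andbT; apply/negP => Hy2.
  by move/hasP: Hno; apply; exists y.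
have Hpr := path_restr Hp Hsub2.
have Hcb : connect (restr e (K :\: sep K)) a b.
  by rewrite -Hl; apply: path_connect Hpr _; apply: mem_last.
apply: (IH m.+1); first lia.
  by rewrite /= -/K -Eab (gcomp_eq Hcb).
move=> y Hy; rewrite /= -/K inE Hsub2 //=.
exact: path_connect Hpr Hy.
Qed.

Lemma hub_on_shortest_path a b : exists2 s, (s \in hubs a) && (s \in hubs b) &
  dist e a s + dist e s b = dist e a b.
Proof.
have [p [Hp Hl Hs]] := ball_path (dist_ball econ a b).
have [s Hsp Hsh] := hub_on_path Hp Hl (leqnn (lg.+1 - 0)) (erefl _) (fun y _ => in_setT y).
exists s => //; apply/eqP; rewrite eqn_leq dist_tri // andbT.
case: (splitPl Hsp) Hp Hl Hs => p1 p2 Hls.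
rewrite cat_path Hls => /andP[Hp1 Hp2]; rewrite last_cat Hls size_cat => Hl Hs.
have := path_dist econ Hp1; rewrite Hls.
have := path_dist econ Hp2; rewrite Hl.
lia.
Qed.

Lemma card_hubs tw a : (forall K, #|sep K| <= tw.+1) -> #|hubs a| <= lg.+1 * tw.+1.
Proof.
move=> Hk; apply: leq_trans (card_bigcup_leq _ _) _.
have Hsum : \sum_(m < lg.+1) #|sep (region a m)| <= \sum_(m < lg.+1) tw.+1.
  by apply: leq_sum => m _; apply: Hk.
by apply: leq_trans Hsum _; rewrite sum_nat_const card_ord.
Qed.

End Hubs.

Lemma OPT_hub_bound (T : finType) (e : rel T) (I : finType) (r : rel I)
    (B : I -> {set T}) (tw : nat) (x0 : T) :
  symmetric e -> connected_graph e -> tree_decomposition e r B ->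
  (forall i, #|B i| <= tw.+1) ->
  OPT e <= #|T| * ((trunc_log 2 #|T|).+1 * tw.+1 * (max_degree e).+1).
Proof.
move=> esym econ Htd Hbag.
have Hsep K : exists i, [forall v, 2 * #|gcomp e (K :\: B i) v| <= #|K|].
  by have [i Hi] := balanced_bag esym Htd x0 K; exists i; apply/forallP.
pose sep K := B (xchoose (Hsep K)).
have sep_balanced K v : 2 * #|gcomp e (K :\: sep K) v| <= #|K|.
  by have /forallP := xchooseP (Hsep K); apply.
have Hcov := covers_hub_cover esym econ
  (fun a b _ _ => hub_on_shortest_path esym econ sep_balanced a b).
apply: leq_trans (OPT_min Hcov) _; apply: leq_trans (card_hub_cover _ _) _.
rewrite -sum_nat_const; apply: leq_sum => a _.
apply: leq_trans (card_closed_nbhd _ _) _; rewrite leq_mul2r.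
by rewrite (card_hubs _ _ (fun K => Hbag _)) orbT.
Qed.

(* With at most one vertex there are no non-edges to cover. *)
Lemma OPT_small (T : finType) (e : rel T) : #|T| <= 1 -> OPT e = 0.
Proof.
move=> Hn; have cover0 : covers e set0.
  apply/forallP => -[a b]; apply/implyP; rewrite inE /= => /andP[ab _].
  by rewrite (card_le1_eqP Hn a b isT isT) eqxx in ab.
by apply/eqP; rewrite -leqn0; have := OPT_min cover0; rewrite cards0.
Qed.

Lemma edge_ex (T : finType) (e : rel T) : irreflexive e -> connected_graph e ->
  1 < #|T| -> exists u v, u != v /\ e u v.
Proof.
move=> eirr econ Hn.
have [x [y xy]] : exists x y : T, x != y.
  have /card_gt0P[x _] : 0 < #|T| by lia.
  have /card_gt0P[y] : 0 < #|[set~ x]| by rewrite cardsC1; lia.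
  by rewrite !inE eq_sym => xy; exists x, y.
have /connectP[[|z p] /= Hp Hl] := econ x y; first by rewrite Hl eqxx in xy.
move: Hp => /andP[Exz _]; exists x, z; split => //.
by apply/eqP => E; rewrite E eirr in Exz.
Qed.

Lemma bag_le_width (T I : finType) (B : I -> {set T}) i : #|B i| <= (td_width B).+1.
Proof. by have := @leq_bigmax I (fun i => #|B i|) i; rewrite /td_width; lia. Qed.

(* A graph with an edge has tree-width at least 1: some bag holds both ends. *)
Lemma width_pos (T I : finType) (e : rel T) (r : rel I) (B : I -> {set T}) u v :
  tree_decomposition e r B -> u != v -> e u v -> 1 <= td_width B.
Proof.
move=> [_ _ Hedge _] uv Euv; have [i /andP[ui vi]] := Hedge u v Euv.
have : 1 < #|B i|.
  rewrite (cardsD1 u) ui ltnS card_gt0; apply/set0Pn; exists v; by rewrite !inE eq_sym uv.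
have := @leq_bigmax I (fun i => #|B i|) i; rewrite /td_width; lia.
Qed.

Lemma max_degree_pos (T : finType) (e : rel T) u v : e u v -> 0 < max_degree e.
Proof.
move=> Euv; apply: leq_trans (@leq_bigmax T (fun v => #|[set w | e v w]|) u).
by rewrite card_gt0; apply/set0Pn; exists v; rewrite inE.
Qed.

(* For D, tw, log n >= 1 the hub bound is within a factor 8 of the target
   expression, since lg + 1 <= 2 lg, tw + 1 <= 2 tw and D + 1 <= 2 D. *)
Lemma hub_bound_arith n D tw lg : 1 <= D -> 1 <= tw -> 1 <= lg ->
  n * (lg.+1 * tw.+1 * D.+1) <= 8 * (D * (D + tw * lg) * n * lg).
Proof.
move=> HD Htw Hlg.
have E1 : lg.+1 * tw.+1 * D.+1 <= (2 * lg) * (2 * tw) * (2 * D).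
  by apply: leq_mul; [apply: leq_mul|]; lia.
apply: leq_trans (leq_mul (leqnn n) E1) _.
have E2 : D * tw * n * lg <= D * (D + tw * lg) * n * lg.
  by rewrite !leq_mul2r leq_mul2l (leq_trans (leq_pmulr tw Hlg) (leq_addl D _)) !orbT.
apply: leq_trans _ (leq_mul (leqnn 8) E2).
nia.
Qed.

Theorem theorem7 :
  exists C : nat,
    forall (T : finType) (e : rel T) (tw : nat),
      simple_graph e -> connected_graph e -> is_treewidth e tw ->
      let n := #|T| in
      let D := max_degree e in
      let lg := trunc_log 2 n in
      OPT e <= C * (D * (D + tw * lg) * n * lg).
Proof.
exists 8 => T e tw [esym eirr] econ [[I [r [B [Htd <-]]]] _] /=.
case: (leqP #|T| 1) => [/OPT_small->//|Hn].
have [u [v [uv Euv]]] := edge_ex eirr econ Hn.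
apply: leq_trans (OPT_hub_bound u esym econ Htd (bag_le_width B)) _.
apply: hub_bound_arith; first exact: max_degree_pos Euv.
  exact: width_pos Htd uv Euv.
exact: trunc_log_max.
Qed.
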